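(* For every cubic graph $G$ that contains a perfect matching, $\nu_2(G) \geq \frac{5}{6}\cdot |V(G)|$.
   Context: Graphs are finite, without loops, possibly with multiple edges; a graph is cubic if every vertex has degree $3$. For $k\geq 1$, $\nu_k(G)$ is the maximum number of edges of a $k$-edge-colorable subgraph of $G$. *)

From mathcomp Require Import all_boot.
Set Implicit Arguments. Unset Strict Implicit. Unset Printing Implicit Defensive.

(* Parallel edges are allowed (distinct edges may have equal ends). *)

Section Multigraph.
Variables (V E : finType) (ends : E -> {set V}).

Definition loopless : Prop := forall e : E, #|ends e| = 2.

Definition incident (v : V) : {set E} := [set e | v \in ends e].

(* degree = number of incident edges (no loops, so each counts once) *)
Definition cubic : Prop := forall v : V, #|incident v| = 3.

Definition perfect_matching (M : {set E}) : Prop :=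
  forall v : V, #|M :&: incident v| = 1.

Definition has_perfect_matching : Prop := exists M, perfect_matching M.

Definition adjacent (e f : E) : bool :=
  (e != f) && [exists v, (v \in ends e) && (v \in ends f)].

Definition k_edge_colorable (k : nat) (F : {set E}) : bool :=
  [exists c : {ffun E -> 'I_k},
    [forall e in F, forall f in F, adjacent e f ==> (c e != c f)]].

Definition nu (k : nat) : nat :=
  \max_(F : {set E} | k_edge_colorable k F) #|F|.

End Multigraph.

From mathcomp Require Import all_boot zify.
Set Implicit Arguments. Unset Strict Implicit.

(* The complement [H] of a perfect matching [M] of a cubic graph is a 2-factor,
   so [|M| = |V|/2] and [|H| = |V|].  A maximum matching [F] inside [H] meets
   every edge of [H], and each edge of [F] meets at most three edges of the
   2-regular [H]; hence [|F| >= |V|/3].  Colouring [M] with one colour and [F]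
   with the other shows that [M :|: F] is 2-edge-colourable, and it has
   [|M| + |F| >= 5|V|/6] edges. *)

Section Matchings.
Variables (V E : finType) (ends : E -> {set V}).

Definition is_matching (F : {set E}) : bool :=
  [forall v, #|F :&: incident ends v| <= 1].

Definition edge_nbhd (f : E) : {set E} :=
  [set h | [exists v, (v \in ends f) && (v \in ends h)]].

Lemma sum_card_incident (S : {set E}) :
  \sum_(v : V) #|S :&: incident ends v| = \sum_(e in S) #|ends e|.
Proof.
transitivity (\sum_(v : V) \sum_(e in S) ((v \in ends e) : nat)).
  apply: eq_bigr => v _; rewrite -sum1_card big_mkcond [RHS]big_mkcond /=.
  by apply: eq_bigr => e _; rewrite !inE; case: (e \in S); case: (v \in ends e).
rewrite exchange_big; apply: eq_bigr => e _.
by rewrite -sum1_card [RHS]big_mkcond /=; apply: eq_bigr => v _; case: (v \in ends e).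
Qed.

Lemma k_edge_colorable_matchingU (M F : {set E}) :
  is_matching M -> is_matching F -> k_edge_colorable ends 2 (M :|: F).
Proof.
move=> /forallP matchM /forallP matchF.
apply/existsP; exists [ffun e => if e \in M then (ord0 : 'I_2) else ord_max].
apply/forall_inP => e eMF; apply/forall_inP => f fMF; apply/implyP.
case/andP => neq_ef /existsP [w /andP [we wf]].
have notboth (X : {set E}) : #|X :&: incident ends w| <= 1 -> e \in X -> f \in X -> False.
  move=> /card_le1_eqP X1 eX fX.
  by move: neq_ef; rewrite (X1 e f) ?eqxx // !inE ?eX ?fX ?we ?wf.
rewrite !ffunE; case eM: (e \in M); case fM: (f \in M) => //.
- by case: (notboth M (matchM w)).
- case: (notboth F (matchF w)).
  + by move: eMF; rewrite inE eM.
  + by move: fMF; rewrite inE fM.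
Qed.

Lemma k_edge_colorable_le_nu k (F : {set E}) :
  k_edge_colorable ends k F -> #|F| <= nu ends k.
Proof. exact: (@leq_bigmax_cond _ _ (fun F : {set E} => #|F|)). Qed.

Hypothesis ends2 : loopless ends.

Lemma regular_card k (S : {set E}) :
  (forall v, #|S :&: incident ends v| = k) -> k * #|V| = 2 * #|S|.
Proof.
move=> Sk; have := sum_card_incident S.
rewrite (eq_bigr (fun _ => k)) // [RHS](eq_bigr (fun _ => 2)) => [|e _]; last exact: ends2.
by rewrite !sum_nat_const cardT -cardE mulnC => ->; rewrite mulnC.
Qed.

Lemma card_edge_nbhd d (H : {set E}) (f : E) :
  (forall v, #|H :&: incident ends v| <= d) -> f \in H ->
  #|H :&: edge_nbhd f| <= 2 * d - 1.
Proof.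
move=> Hd fH; have /cards2P [u [v [_ ends_f]]] : #|ends f| == 2 by rewrite ends2.
have sub : H :&: edge_nbhd f \subset (H :&: incident ends u) :|: (H :&: incident ends v).
  apply/subsetP => h; rewrite !inE => /andP [-> /existsP [w /andP [wf wh]]].
  by move: wf; rewrite ends_f !inE => /orP [] /eqP <-; rewrite wh ?orbT.
have f_shared : 0 < #|(H :&: incident ends u) :&: (H :&: incident ends v)|.
  by apply/card_gt0P; exists f; rewrite !inE fH ends_f !inE !eqxx ?orbT.
apply: leq_trans (subset_leq_card sub) _; rewrite cardsU.
by have := Hd u; have := Hd v; lia.
Qed.

Lemma maximum_matching_nbhd (H F : {set E}) (h : E) :
  F \subset H -> is_matching F ->
  (forall F' : {set E}, F' \subset H -> is_matching F' -> #|F'| <= #|F|) ->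
  h \in H -> exists2 f, f \in F & h \in edge_nbhd f.
Proof.
move=> FH matchF maxF hH.
case: (boolP [exists f in F, h \in edge_nbhd f]) => [/exists_inP // | /exists_inPn farF].
have far f w : f \in F -> w \in ends f -> w \in ends h -> False.
  by move=> fF wf wh; move/negP: (farF f fF); apply; rewrite inE; apply/existsP; exists w; rewrite wf.
have hF : h \notin F.
  apply/negP => hF; have /cards2P [u [w [_ ends_h]]] : #|ends h| == 2 by rewrite ends2.
  by apply: (far h u hF); rewrite ends_h !inE eqxx.
have matchhF : is_matching (h |: F).
  apply/forallP => v; rewrite setIUl; apply: leq_trans (leq_card_setU _ _) _.
  have := forallP matchF v; case vh: (v \in ends h).
  - have -> : F :&: incident ends v = set0.
      by apply/setP => f; rewrite !inE; apply/andP => -[fF vf]; exact: (far f v fF vf).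
    rewrite cards0 addn0 => _.
    by apply: leq_trans (subset_leq_card (subsetIl _ _)) _; rewrite cards1.
  - suff -> : [set h] :&: incident ends v = set0 by rewrite cards0 add0n.
    by apply/setP => f; rewrite !inE; apply/andP => -[/eqP -> ]; rewrite vh.
have := maxF _ _ matchhF; rewrite subUset sub1set hH FH cardsU1 hF => /(_ isT).
by rewrite ltnn.
Qed.

Lemma card_le_nbhd_cover d (H F : {set E}) :
  (forall v, #|H :&: incident ends v| <= d) -> F \subset H ->
  {in H, forall h, exists2 f, f \in F & h \in edge_nbhd f} ->
  #|H| <= (2 * d - 1) * #|F|.
Proof.
move=> Hd FH cover; rewrite -sum1_card.
apply: (@leq_trans (\sum_(h in H) \sum_(f in F) ((h \in edge_nbhd f) : nat))).
  by apply: leq_sum => h /cover [f fF hf]; rewrite (bigD1 f) //= hf.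
rewrite exchange_big -sum1_card big_distrr /=; apply: leq_sum => f fF.
rewrite muln1; apply: leq_trans (card_edge_nbhd Hd (subsetP FH f fF)).
rewrite -sum1_card big_mkcond [X in _ <= X]big_mkcond /=; apply: leq_sum => h _.
by rewrite in_setI; case: (h \in H); case: (h \in edge_nbhd f).
Qed.

End Matchings.

Lemma compl_perfect_matching_incident (V E : finType) (ends : E -> {set V}) M v :
  cubic ends -> perfect_matching ends M -> #|~: M :&: incident ends v| = 2.
Proof.
move=> cub pm; have := cardsID M (incident ends v).
by rewrite cub setIC pm setDE setIC => -[].
Qed.

Theorem lemma1 (V E : finType) (ends : E -> {set V}) :
  loopless ends -> cubic ends -> has_perfect_matching ends ->
  5 * #|V| <= 6 * nu ends 2.
Proof.
move=> ends2 cub [M pm]; set H := ~: M.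
have H2 v : #|H :&: incident ends v| = 2 := compl_perfect_matching_incident v cub pm.
have cardM : 1 * #|V| = 2 * #|M| := regular_card ends2 pm.
have cardH : 2 * #|V| = 2 * #|H| := regular_card ends2 H2.
have matchM : is_matching ends M by apply/forallP => v; rewrite pm.
pose matchingH (F : {set E}) := (F \subset H) && is_matching ends F.
have matching0 : matchingH set0.
  by rewrite /matchingH sub0set; apply/forallP => v; rewrite set0I cards0.
have [F /andP [FH matchF] maxF] := arg_maxnP (fun F : {set E} => #|F|) matching0.
have cardF : #|H| <= (2 * 2 - 1) * #|F|.
  apply: (card_le_nbhd_cover ends2 _ FH) => [v | h hH]; first by rewrite H2.
  apply: (maximum_matching_nbhd ends2 FH matchF _ hH) => F' F'H matchF'.
  by apply: maxF; rewrite /matchingH F'H.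
have cardMF : #|M :|: F| = #|M| + #|F|.
  by rewrite cardsU disjoint_setI0 ?cards0 ?subn0 // disjoint_sym disjoints_subset.
have := k_edge_colorable_le_nu (k_edge_colorable_matchingU matchM matchF).
by rewrite cardMF; lia.
Qed.
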